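(* Let $\Psi\subset\hat G$, let $R_\Psi$ be the associated character group ring, and let $x\in R_\Psi$ be a non-zerodivisor. Then $\#R_\Psi/(x)=\#\mathcal{O}/\big(\prod_{\psi\in\Psi}\psi(x)\big)$.
   Context: $G$ is a finite abelian group, $p$ an odd prime, $\mathcal{O}$ a finite extension of $\mathbf{Z}_p$ containing all values of all characters $G\to\overline{\mathbf{Q}}_p^*$, and $\hat G$ the set of these characters. For $\Psi\subset\hat G$, the character group ring $R_\Psi$ is the image of $\mathcal{O}[G]\to\prod_{\psi\in\Psi}\mathcal{O}$, $x\mapsto(\psi(x))_{\psi}$, and $\psi(x)$ for $x\in R_\Psi$ denotes the $\psi$-coordinate. *)

From HB Require Import structures.
From mathcomp Require Import all_boot all_order all_algebra all_fingroup all_solvable.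
Set Implicit Arguments. Unset Strict Implicit. Unset Printing Implicit Defensive.
Import Order.TTheory GRing.Theory Num.Theory.
Local Open Scope ring_scope.

(* O is a "finite extension of Z_p": a complete discrete valuation ring of
   characteristic 0 whose residue field is finite of characteristic p. *)
Definition is_finite_ext_Zp (p : nat) (O : idomainType) : Prop :=
  (forall n : nat, (0 < n)%N -> n%:R != 0 :> O) /\
  exists pi : O,
    [/\ pi != 0 /\ pi \isn't a GRing.unit,
        (forall a : O, a != 0 -> exists n (u : O), u \is a GRing.unit /\ a = u * pi ^+ n),
        (exists c : O, p%:R = pi * c),
        (exists s : seq O, forall a : O, exists2 r, r \in s & exists c, a - r = pi * c) &
        (forall a : nat -> O,
            (forall n, exists c, a n.+1 - a n = pi ^+ n * c) ->
            exists l : O, forall n, exists c, l - a n = pi ^+ n * c)].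

Definition is_character (gT : finGroupType) (O : idomainType) (chi : gT -> O) : Prop :=
  chi 1%g = 1 /\ forall g h : gT, chi (g * h)%g = chi g * chi h.

(* The map O[G] -> prod_{psi in Psi} O, indexing Psi by 'I_(size Psi). *)
Definition char_eval (gT : finGroupType) (O : idomainType) (Psi : seq {ffun gT -> O})
  (f : {ffun gT -> O}) : {ffun 'I_(size Psi) -> O} :=
  [ffun i : 'I_(size Psi) => \sum_(g : gT) f g * (nth 0 Psi i) g].

Definition in_R_Psi (gT : finGroupType) (O : idomainType) (Psi : seq {ffun gT -> O})
  (v : {ffun 'I_(size Psi) -> O}) : Prop :=
  exists f : {ffun gT -> O}, char_eval Psi f = v.

Arguments in_R_Psi {gT O} Psi v.

Definition pmul (O : idomainType) (n : nat) (u v : {ffun 'I_n -> O}) : {ffun 'I_n -> O} :=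
  [ffun i => u i * v i].

(* The set S, modulo the equivalence eqv, has exactly n classes
   (i.e. the quotient S/eqv has cardinality n). *)
Definition num_classes (T : Type) (S : T -> Prop) (eqv : T -> T -> Prop) (n : nat) : Prop :=
  exists r : 'I_n -> T,
    [/\ forall i, S (r i),
        forall i j, eqv (r i) (r j) -> i = j &
        forall a, S a -> exists i, eqv a (r i)].

Definition R_Psi_cong (gT : finGroupType) (O : idomainType) (Psi : seq {ffun gT -> O})
  (x a b : {ffun 'I_(size Psi) -> O}) : Prop :=
  exists r, in_R_Psi Psi r /\ a - b = pmul x r.

Definition O_cong (O : idomainType) (c a b : O) : Prop := exists r : O, a - b = c * r.

From HB Require Import structures.
From mathcomp Require Import all_boot all_order all_algebra all_fingroup all_solvable.
From mathcomp Require Import ring.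
From Stdlib Require Import Classical.
Import Order.TTheory GRing.Theory Num.Theory.
Local Open Scope ring_scope.
Set Implicit Arguments. Unset Strict Implicit. Unset Printing Implicit Defensive.

(* All indices are computed inside U = O^Psi. Orthogonality of distinct characters gives
   #|G| U <= R_Psi, so R_Psi has finite index in U, and a non-zerodivisor x of R_Psi has
   no zero coordinate, so multiplication by x is injective on U. For an injective
   endomorphism f of an abelian group U and a subgroup L of finite index with f L <= L,
   [U : fL] = [U : fU] [fU : fL] = [U : L] [L : fL] and [fU : fL] = [U : L], hence
   [L : fL] = [U : fU]. Finally [U : xU] = prod [O : x_psi] = [O : prod x_psi], because
   indices of principal ideals of the domain O are multiplicative; they are finite since
   O is a discrete valuation ring with finite residue field. *)

Section NumClasses.
Variable T : Type.

Lemma eq_num_classes (S S' : T -> Prop) (e e' : T -> T -> Prop) n :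
  (forall a, S a <-> S' a) -> (forall a b, e a b <-> e' a b) ->
  num_classes S e n -> num_classes S' e' n.
Proof.
move=> eqS eqe [r [Sr r_inj r_cover]]; exists r; split.
- by move=> i; apply/eqS.
- by move=> i j /eqe; apply: r_inj.
- by move=> a /eqS /r_cover [i /eqe]; exists i.
Qed.

Lemma num_classes_card (I : finType) (S : T -> Prop) (e : T -> T -> Prop) (r : I -> T) :
  (forall i, S (r i)) -> (forall i j, e (r i) (r j) -> i = j) ->
  (forall a, S a -> exists i, e a (r i)) -> num_classes S e #|I|.
Proof.
move=> Sr r_inj r_cover; exists (r \o enum_val); split.
- by move=> i; apply: Sr.
- by move=> i j /r_inj /enum_val_inj.
- by move=> a /r_cover [i]; exists (enum_rank i); rewrite /= enum_rankK.
Qed.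

Variables (e : T -> T -> Prop) (e_sym : forall a b, e a b -> e b a)
  (e_trans : forall a b c, e a b -> e b c -> e a c).

Lemma num_classes_uniq (S : T -> Prop) k m :
  num_classes S e k -> num_classes S e m -> k = m.
Proof.
suff le_k_m k' m' : num_classes S e k' -> num_classes S e m' -> (k' <= m')%N.
  by move=> Sk Sm; apply/eqP; rewrite eqn_leq !le_k_m.
move=> [r [Sr r_inj _]] [r' [_ _ r'_cover]].
have /fin_all_exists [f rf] : forall i, exists j, e (r i) (r' j).
  by move=> i; apply: r'_cover (Sr i).
have f_inj : injective f.
  by move=> i j fij; apply: r_inj; apply: e_trans (rf i) _; rewrite fij; apply: e_sym.
by have := leq_card f f_inj; rewrite !card_ord.
Qed.

Lemma num_classesS (S : T -> Prop) b m : S b ->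
  num_classes (fun a => S a /\ ~ e a b) e m -> num_classes S e m.+1.
Proof.
move=> Sb [r [Sr r_inj r_cover]].
exists (fun i => if unlift ord0 i is Some j then r j else b); split.
- by move=> i; case: unliftP => [j|] _ //; case: (Sr j).
- move=> i j.
  case: (unliftP ord0 i) => [i' ->|->]; case: (unliftP ord0 j) => [j' ->|->] //.
  + by move/r_inj ->.
  + by case: (Sr i').
  + by move/e_sym; case: (Sr j').
- move=> a Sa; have [eab|neab] := classic (e a b).
    by exists ord0; rewrite unlift_none.
  by have [j ?] := r_cover a (conj Sa neab); exists (lift ord0 j); rewrite liftK.
Qed.

Lemma num_classes_cover k (r : 'I_k -> T) (S : T -> Prop) :
  (forall a, S a -> exists i, e a (r i)) -> exists m, num_classes S e m.
Proof.
elim: k r S => [|k IHk] r S cover.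
  by exists 0%N, r; split=> [[]|[]|a /cover [[]]].
have [[b [Sb eb0]] | no_b] := classic (exists b, S b /\ e b (r ord0)).
  have [|m Sm] := IHk (r \o lift ord0) (fun a => S a /\ ~ e a b).
    move=> a [Sa neab]; have [i eai] := cover a Sa.
    case: (unliftP ord0 i) eai => [j ->|->]; first by exists j.
    by move=> ea0; case: neab; apply: e_trans ea0 (e_sym eb0).
  by exists m.+1; apply: num_classesS Sm.
apply: (IHk (r \o lift ord0) S) => a Sa; have [i eai] := cover a Sa.
case: (unliftP ord0 i) eai => [j ->|->]; first by exists j.
by move=> ea0; case: no_b; exists a.
Qed.

Lemma num_classes_sub (A B : T -> Prop) (e0 : T -> T -> Prop) N :
  (forall a, B a -> A a) -> (forall a b, e0 a b -> e a b) ->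
  num_classes A e0 N -> exists m, num_classes B e m.
Proof.
move=> BA e0e [r [_ _ r_cover]]; apply: (num_classes_cover (r := r)).
by move=> a /BA /r_cover [i ?]; exists i; apply: e0e.
Qed.

End NumClasses.

Lemma num_classes_iff (T T' : Type) (S : T -> Prop) (S' : T' -> Prop)
    (e : T -> T -> Prop) (e' : T' -> T' -> Prop) m :
  (forall a b, e a b -> e b a) -> (forall a b c, e a b -> e b c -> e a c) ->
  (forall a b, e' a b -> e' b a) -> (forall a b c, e' a b -> e' b c -> e' a c) ->
  num_classes S e m -> num_classes S' e' m ->
  forall n, num_classes S e n <-> num_classes S' e' n.
Proof.
move=> e_sym e_trans e'_sym e'_trans Sm S'm n; split=> Sn.
  by rewrite -(num_classes_uniq e_sym e_trans Sm Sn).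
by rewrite -(num_classes_uniq e'_sym e'_trans S'm Sn).
Qed.

Definition is_addgroup (V : zmodType) (A : V -> Prop) : Prop :=
  A 0 /\ forall a b, A a -> A b -> A (a - b).

Definition eqmod (V : zmodType) (B : V -> Prop) (a b : V) : Prop := B (a - b).

Definition image_pred (V W : Type) (f : V -> W) (A : V -> Prop) (w : W) : Prop :=
  exists a, A a /\ w = f a.

Section AddGroup.
Variable V : zmodType.
Implicit Types A B C : V -> Prop.

Lemma is_addgroupN A : is_addgroup A -> forall a, A a -> A (- a).
Proof. by move=> [A0 AB] a Aa; rewrite -sub0r; apply: AB. Qed.

Lemma is_addgroupD A : is_addgroup A -> forall a b, A a -> A b -> A (a + b).
Proof.
by move=> gA a b Aa Ab; rewrite -[b]opprK; apply: gA.2 => //; apply: is_addgroupN.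
Qed.

Lemma eqmod_sym B : is_addgroup B -> forall a b, eqmod B a b -> eqmod B b a.
Proof. by move=> gB a b Bab; rewrite /eqmod -opprB; apply: is_addgroupN. Qed.

Lemma eqmod_trans B : is_addgroup B ->
  forall a b c, eqmod B a b -> eqmod B b c -> eqmod B a c.
Proof.
by move=> gB a b c Bab Bbc; rewrite /eqmod -[a](subrK b) -addrA; apply: is_addgroupD.
Qed.

Lemma num_classes_eqmodM B C k m : is_addgroup B -> is_addgroup C ->
  (forall c, C c -> B c) ->
  num_classes (fun=> True) (eqmod B) k -> num_classes B (eqmod C) m ->
  num_classes (fun=> True) (eqmod C) (k * m).
Proof.
move=> gB gC CB [r [_ r_inj r_cover]] [s [Bs s_inj s_cover]].
have -> : (k * m)%N = #|{: 'I_k * 'I_m}| by rewrite card_prod !card_ord.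
apply: (num_classes_card (r := fun ij => r ij.1 + s ij.2)) => //.
  move=> [i j] [i' j'] Cij.
  have Bii' : eqmod B (r i) (r i').
    rewrite /eqmod; have -> : r i - r i' = (r i + s j - (r i' + s j')) - (s j - s j').
      by rewrite opprD addrACA addrK.
    by apply: gB.2; [apply: CB | apply: gB.2].
  have ii' := r_inj _ _ Bii'; subst i'.
  by congr (_, _); apply: s_inj; move: Cij; rewrite /eqmod opprD addrACA subrr add0r.
move=> a _; have [i Bai] := r_cover a I; have [j Cj] := s_cover _ Bai.
by exists (i, j); rewrite /eqmod /= opprD addrA.
Qed.

Lemma is_addgroup_image (W : zmodType) (f : V -> W) A :
  {morph f : a b / a - b} -> is_addgroup A -> is_addgroup (image_pred f A).
Proof.
move=> fB [A0 AB]; split.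
  by exists 0; split=> //; have := fB 0 0; rewrite !subrr.
by move=> _ _ [a [Aa ->]] [b [Ab ->]]; exists (a - b); rewrite fB; split; first exact: AB.
Qed.

Lemma num_classes_eqmod_morph (W : zmodType) (f : V -> W) A B k :
  {morph f : a b / a - b} -> injective f ->
  num_classes A (eqmod B) k -> num_classes (image_pred f A) (eqmod (image_pred f B)) k.
Proof.
move=> fB f_inj [r [Ar r_inj r_cover]]; exists (f \o r); split.
- by move=> i; exists (r i).
- move=> i j [b [Bb]]; rewrite /= -fB => /f_inj eq_b.
  by apply: r_inj; rewrite /eqmod eq_b.
- move=> _ [a [Aa ->]]; have [i Bai] := r_cover a Aa.
  by exists i, (a - r i); rewrite fB.
Qed.

Lemma num_classes_stable_image (f : V -> V) L k N :
  {morph f : a b / a - b} -> injective f ->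
  is_addgroup L -> (forall a, L a -> L (f a)) ->
  num_classes (fun=> True) (eqmod L) k ->
  num_classes (fun=> True) (eqmod (image_pred f (fun=> True))) N ->
  num_classes L (eqmod (image_pred f L)) N.
Proof.
move=> fB f_inj gL Lf Uk UfN.
have gfL := is_addgroup_image fB gL.
have gfU : is_addgroup (image_pred f (fun=> True)) by apply: is_addgroup_image.
have fLfU a : image_pred f L a -> image_pred f (fun=> True) a by case=> b [_ ->]; exists b.
have fLL a : image_pred f L a -> L a by case=> b [Lb ->]; apply: Lf.
have UfL_Nk := num_classes_eqmodM gfU gfL fLfU UfN (num_classes_eqmod_morph fB f_inj Uk).
have [m LfL_m] := num_classes_sub (eqmod_sym gfL) (eqmod_trans gfL) (B := L)
  (fun _ _ => I) (fun _ _ => id) UfL_Nk.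
have UfL_km := num_classes_eqmodM gL gfL fLL Uk LfL_m.
have k_gt0 : (0 < k)%N.
  by case: Uk => r [_ _ r_cover]; have [i _] := r_cover 0 I; apply: leq_ltn_trans (ltn_ord i).
have /eqP := num_classes_uniq (eqmod_sym gfL) (eqmod_trans gfL) UfL_Nk UfL_km.
by rewrite mulnC eqn_pmul2l // => /eqP ->.
Qed.

End AddGroup.

Section Multiples.
Variable O : idomainType.

Definition multiples (c v : O) : Prop := exists r, v = c * r.

Lemma is_addgroup_multiples c : is_addgroup (multiples c).
Proof.
split; first by exists 0; rewrite mulr0.
by move=> _ _ [a ->] [b ->]; exists (a - b); rewrite mulrBr.
Qed.

Lemma num_classes_multiples_unit u : u \is a GRing.unit ->
  num_classes (fun=> True) (eqmod (multiples u)) 1.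
Proof.
move=> uU; exists (fun=> 0); split=> // [i j _|a _]; first by rewrite !ord1.
by exists ord0, (u^-1 * (a - 0)); rewrite mulrA mulrV ?mul1r.
Qed.

Lemma num_classes_multiplesM a b k m : a != 0 ->
  num_classes (fun=> True) (eqmod (multiples a)) k ->
  num_classes (fun=> True) (eqmod (multiples b)) m ->
  num_classes (fun=> True) (eqmod (multiples (a * b))) (k * m).
Proof.
move=> a0 Ok Om.
apply: num_classes_eqmodM (is_addgroup_multiples _) (is_addgroup_multiples _) _ Ok _.
  by move=> _ [r ->]; exists (b * r); rewrite mulrA.
have := num_classes_eqmod_morph (mulrBr a) (mulfI a0) Om.
apply: eq_num_classes => [v|u v]; rewrite /eqmod; split.
- by case=> r [_ ->]; exists r.
- by case=> r ->; exists r.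
- by case=> w [[r ->] ->]; exists r; rewrite mulrA.
- by case=> r ->; exists (b * r); split; [exists r | rewrite mulrA].
Qed.

Lemma num_classes_multiples_prod (I : Type) (x : I -> O) (N : I -> nat) :
  (forall i, x i != 0) ->
  (forall i, num_classes (fun=> True) (eqmod (multiples (x i))) (N i)) ->
  forall s : seq I, num_classes (fun=> True)
    (eqmod (multiples (\prod_(i <- s) x i))) (\prod_(i <- s) N i)%N.
Proof.
move=> x_neq0 ON; elim=> [|i s IHs].
  by rewrite !big_nil; apply: num_classes_multiples_unit; rewrite unitr1.
by rewrite !big_cons; apply: num_classes_multiplesM.
Qed.

Lemma num_classes_multiples_finite p c : is_finite_ext_Zp p O -> c != 0 ->
  exists N, num_classes (fun=> True) (eqmod (multiples c)) N.
Proof.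
move=> [_ [pi [[pi0 _] pi_factor _ [s residues] _]]] c0.
have gpi := is_addgroup_multiples pi.
have [N1 ON1] : exists N, num_classes (fun=> True) (eqmod (multiples pi)) N.
  apply: (num_classes_cover (eqmod_sym gpi) (eqmod_trans gpi) (r := nth 0 s)).
  move=> a _; have [r rs [d ard]] := residues a.
  have r_idx : (index r s < size s)%N by rewrite index_mem.
  by exists (Ordinal r_idx), d; rewrite /= nth_index.
have piX e : exists N, num_classes (fun=> True) (eqmod (multiples (pi ^+ e))) N.
  elim: e => [|e [N ON]].
    by exists 1%N; apply: num_classes_multiples_unit; rewrite unitr1.
  by exists (N * N1)%N; rewrite exprSr; apply: num_classes_multiplesM; rewrite ?expf_neq0.
have [e [u [uU ->]]] := pi_factor c c0; have [N ON] := piX e.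
exists (1 * N)%N; apply: num_classes_multiplesM (num_classes_multiples_unit uU) ON.
by apply: contraTneq uU => ->; rewrite unitr0.
Qed.

End Multiples.

Section Coordinatewise.
Variables (O : idomainType) (n : nat).
Implicit Types x u v : {ffun 'I_n -> O}.

Lemma pmulB x : {morph pmul x : u v / u - v}.
Proof. by move=> u v; apply/ffunP => i; rewrite !ffunE mulrBr. Qed.

Lemma pmul_inj x : (forall i, x i != 0) -> injective (pmul x).
Proof.
move=> x_neq0 u v /ffunP eq_xuv; apply/ffunP => i; apply: (mulfI (x_neq0 i)).
by have := eq_xuv i; rewrite !ffunE.
Qed.

Lemma num_classes_pmul x (N : 'I_n -> nat) :
  (forall i, num_classes (fun=> True) (eqmod (multiples (x i))) (N i)) ->
  num_classes (fun=> True) (eqmod (image_pred (pmul x) (fun=> True)))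
    (\prod_(i < n) N i)%N.
Proof.
move=> /fin_all_exists [R OR].
have -> : (\prod_(i < n) N i)%N = #|{: {dffun forall i : 'I_n, 'I_(N i)}}|.
  by rewrite card_dep_ffun foldrE big_map big_enum; apply: eq_bigr => i _; rewrite card_ord.
pose r (phi : {dffun forall i : 'I_n, 'I_(N i)}) := [ffun i => R i (phi i)].
apply: (num_classes_card (r := r)) => // [phi phi' [u [_ eq_u]]|a _].
- apply/ffunP => i; have [_ R_inj _] := OR i; apply: R_inj; exists (u i).
  by have /ffunP/(_ i) := eq_u; rewrite !ffunE.
- have /fin_all_exists [phi a_phi] :
      forall i, exists j, eqmod (multiples (x i)) (a i) (R i j).
    by move=> i; have [_ _ R_cover] := OR i; apply: R_cover.
  have /fin_all_exists [q a_q] : forall i, exists q, a i - R i (phi i) = x i * q.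
    by move=> i; have [q ?] := a_phi i; exists q.
  exists (finfun phi : {dffun forall i : 'I_n, 'I_(N i)}), [ffun i => q i]; split=> //.
  by apply/ffunP => i; rewrite !ffunE a_q.
Qed.

End Coordinatewise.

Section Characters.
Variables (O : idomainType) (gT : finGroupType).

Lemma character_invgK (chi : gT -> O) :
  is_character chi -> forall g, chi g^-1%g * chi g = 1.
Proof. by move=> [chi1 chiM] g; rewrite -chiM mulVg. Qed.

Lemma sum_character_eq0 (phi : gT -> O) h : is_character phi -> phi h != 1 ->
  \sum_g phi g = 0.
Proof.
move=> [_ phiM] phih1.
have sum_phi : \sum_g phi g = phi h * \sum_g phi g.
  by rewrite {1}(reindex_inj (mulgI h)) mulr_sumr; apply: eq_bigr => g _; rewrite phiM.
have /eqP : (phi h - 1) * \sum_g phi g = 0 by rewrite mulrBl -sum_phi mul1r subrr.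
by rewrite mulf_eq0 subr_eq0 (negbTE phih1) => /eqP.
Qed.

Lemma sum_character_inv_mul (chi psi : {ffun gT -> O}) :
  is_character chi -> is_character psi ->
  \sum_g chi g^-1%g * psi g = if chi == psi then #|gT|%:R else 0.
Proof.
move=> chi_char psi_char; have [<-|chi_neq_psi] := eqVneq chi psi.
  by rewrite (eq_bigr (fun=> 1)) ?sumr_const // => g _; apply: character_invgK.
have [h chih_neq] : exists h, chi h != psi h.
  apply/existsP; apply: contraR chi_neq_psi; rewrite negb_exists => /forallP eq_chi_psi.
  by apply/eqP/ffunP => g; apply/eqP; have := eq_chi_psi g; rewrite negbK.
apply: (@sum_character_eq0 _ h).
  have [chi1 chiM] := chi_char; have [psi1 psiM] := psi_char.
  by split=> [|g g']; rewrite ?invg1 ?chi1 ?psi1 ?mulr1 // invMg chiM psiM; ring.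
apply: contra chih_neq => /eqP chipsi_h; apply/eqP.
by rewrite -[chi h]mulr1 -chipsi_h mulrA [chi h * _]mulrC character_invgK ?mul1r.
Qed.

End Characters.

Section CharacterGroupRing.
Variables (O : idomainType) (gT : finGroupType) (Psi : seq {ffun gT -> O}).
Hypotheses (Psi_char : forall psi, psi \in Psi -> is_character psi) (Psi_uniq : uniq Psi).
Implicit Types u x y : {ffun 'I_(size Psi) -> O}.

Let nth_character (i : 'I_(size Psi)) : is_character (nth 0 Psi i).
Proof. by apply: Psi_char; rewrite mem_nth. Qed.

Lemma in_R_Psi_pmul_card u : in_R_Psi Psi (pmul [ffun=> #|gT|%:R] u).
Proof.
exists [ffun g => \sum_(i < size Psi) u i * nth 0 Psi i g^-1%g].
apply/ffunP => j; rewrite !ffunE.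
under eq_bigr do rewrite ffunE mulr_suml; under eq_bigr do under eq_bigr do rewrite -mulrA.
rewrite exchange_big /=.
under eq_bigr => i _ do rewrite -mulr_sumr sum_character_inv_mul // nth_uniq //.
rewrite (bigD1 j) //= eqxx big1 ?addr0 1?mulrC // => i ij.
by rewrite ifN ?mulr0.
Qed.

Lemma is_addgroup_R_Psi : is_addgroup (in_R_Psi Psi).
Proof.
split.
  by exists 0; apply/ffunP => i; rewrite !ffunE big1 // => g _; rewrite ffunE mul0r.
move=> _ _ [f <-] [f' <-]; exists (f - f'); apply/ffunP => i.
by rewrite !ffunE -sumrB; apply: eq_bigr => g _; rewrite !ffunE mulrBl.
Qed.

Lemma in_R_Psi_pmul x y : in_R_Psi Psi x -> in_R_Psi Psi y -> in_R_Psi Psi (pmul x y).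
Proof.
move=> [f <-] [f' <-]; exists [ffun h => \sum_g f g * f' (g^-1 * h)%g].
apply/ffunP => i; rewrite !ffunE; have [_ psiM] := nth_character i.
under eq_bigr do rewrite ffunE mulr_suml.
rewrite exchange_big mulr_suml; apply: eq_bigr => g _ /=.
rewrite (reindex_inj (mulgI g)) mulr_sumr; apply: eq_bigr => h _.
by rewrite mulKg psiM; ring.
Qed.

Lemma R_Psi_nonzerodivisor_coord_neq0 x : #|gT|%:R != 0 :> O ->
  (forall y, in_R_Psi Psi y -> pmul x y = 0 -> y = 0) -> forall i, x i != 0.
Proof.
move=> card_neq0 nzd_x i; apply: contra card_neq0 => /eqP xi0.
pose delta : {ffun 'I_(size Psi) -> O} := [ffun k => (k == i)%:R].
have x_delta0 : pmul x (pmul [ffun=> #|gT|%:R] delta) = 0.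
  by apply/ffunP => k; rewrite !ffunE; case: eqP => [->|]; rewrite ?xi0 ?mul0r ?mulr0.
have /ffunP/(_ i) := nzd_x _ (in_R_Psi_pmul_card delta) x_delta0.
by rewrite !ffunE eqxx mulr1 => ->.
Qed.

Lemma R_Psi_finite_index p : is_finite_ext_Zp p O -> #|gT|%:R != 0 :> O ->
  exists k, num_classes (fun=> True) (eqmod (in_R_Psi Psi)) k.
Proof.
move=> O_ext card_neq0.
have [N ON] := num_classes_multiples_finite O_ext card_neq0.
have gR := is_addgroup_R_Psi.
pose c : {ffun 'I_(size Psi) -> O} := [ffun=> #|gT|%:R].
have UcU i : num_classes (fun=> True) (eqmod (multiples (c i))) N by rewrite ffunE.
apply: (num_classes_sub (eqmod_sym gR) (eqmod_trans gR) (fun _ => id) _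
  (num_classes_pmul UcU)).
by move=> a b [u [_ eq_ab]]; rewrite /eqmod eq_ab; apply: in_R_Psi_pmul_card.
Qed.

End CharacterGroupRing.

Theorem lemma2p5 (p : nat) (O : idomainType) (gT : finGroupType)
  (Psi : seq {ffun gT -> O}) (x : {ffun 'I_(size Psi) -> O}) :
  prime p -> odd p ->
  is_finite_ext_Zp p O ->
  abelian [set: gT] ->
  (exists z : O, (exponent [set: gT]).-primitive_root z) ->
  uniq Psi ->
  (forall psi, psi \in Psi -> is_character psi) ->
  in_R_Psi Psi x ->
  (forall y, in_R_Psi Psi y -> pmul x y = 0 -> y = 0) ->
  forall n : nat,
    num_classes (in_R_Psi Psi) (R_Psi_cong x) n <->
    num_classes (fun _ : O => True) (O_cong (\prod_(i < size Psi) x i)) n.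
Proof.
move=> _ _ O_ext _ _ Psi_uniq Psi_char Rx nzd_x.
have card_neq0 : #|gT|%:R != 0 :> O by apply: O_ext.1; apply/card_gt0P; exists 1%g.
have x_neq0 := R_Psi_nonzerodivisor_coord_neq0 Psi_char Psi_uniq card_neq0 nzd_x.
have [N ON] := fin_all_exists (fun i => num_classes_multiples_finite O_ext (x_neq0 i)).
have [k Uk] := R_Psi_finite_index Psi_char Psi_uniq O_ext card_neq0.
have gR := is_addgroup_R_Psi Psi.
have gxR := is_addgroup_image (pmulB x) gR.
have gO := is_addgroup_multiples (\prod_(i < size Psi) x i).
(* R_Psi_cong x and O_cong c unfold to eqmod (image_pred (pmul x) (in_R_Psi Psi))
   and eqmod (multiples c). *)
apply: (num_classes_iff (eqmod_sym gxR) (eqmod_trans gxR) (eqmod_sym gO) (eqmod_trans gO)).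
- have R_xR y : in_R_Psi Psi y -> in_R_Psi Psi (pmul x y) := in_R_Psi_pmul Psi_char Rx.
  exact: num_classes_stable_image (pmulB x) (pmul_inj x_neq0) gR R_xR Uk
    (num_classes_pmul ON).
- exact: num_classes_multiples_prod x_neq0 ON _.
Qed.
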